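(* Let $n>2k-t$, $k>t+1$, $q\geq 3$ and $k<2t+2$. Then \[\left[{n-t-2\atop k-t-2}\right]_q\left(1+\theta_{t+2}q^{k-t-1}\frac{q^{n-k}-1}{q^{k-t-1}-1}\right)>\theta_{k+1}-\theta_{k-t}+\left[{n-t\atop k-t}\right]_q-q^{(k-t+1)(k-t)}\left[{n-k-1\atop k-t}\right]_q,\] i.e. in $\mathrm{PG}(n,q)$ the set of all $k$-spaces meeting a fixed $(t+2)$-space in at least a $(t+1)$-space is larger than the set consisting of all $k$-spaces in $\langle\pi,\delta\rangle$ together with all $k$-spaces through $\delta$ meeting $\langle\pi,\delta\rangle$ in at least a $(t+1)$-space (for a $t$-space $\delta$ and $k$-space $\pi$ with $\dim(\pi\cap\delta)=t-1$).
   Context: $\left[{n\atop k}\right]_q=\frac{(q^n-1)\cdots(q^{n-k+1}-1)}{(q^k-1)\cdots(q-1)}$ for $k>0$, $=1$ for $k=0$; $\theta_m=\frac{q^{m+1}-1}{q-1}$; $q$ is a prime power; dimensions are projective. *)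

From mathcomp Require Import all_boot all_order all_algebra.
Set Implicit Arguments. Unset Strict Implicit. Unset Printing Implicit Defensive.
Import Order.TTheory GRing.Theory Num.Theory.
Local Open Scope ring_scope.

Definition is_prime_power (q : nat) : Prop :=
  exists p e : nat, prime p /\ (0 < e)%N /\ q = (p ^ e)%N.

Definition qbinom (q : rat) (n k : nat) : rat :=
  if k == 0%N then 1
  else (\prod_(i < k) (q ^+ (n - i) - 1)) / (\prod_(i < k) (q ^+ i.+1 - 1)).

Definition theta (q : rat) (m : nat) : rat := (q ^+ m.+1 - 1) / (q - 1).

From mathcomp Require Import all_boot all_order all_algebra.
From mathcomp Require Import ring lra zify.
Import Order.TTheory GRing.Theory Num.Theory.
Local Open Scope ring_scope.

(* With s = k - t and P = [n-t-2, s-2]_q, iterating q-Pascal together with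
   q^s [N, s]_q <= [N+1, s]_q gives
     [n-t, s]_q - q^((s+1)s) [n-k-1, s]_q <= theta_s [n-t-1, s-1]_q
                                          = theta_s P (q^(n-t-1) - 1)/(q^(s-1) - 1).
   As P >= 1 and theta_(k+1) >= theta_s, it remains to compare the theta terms
   after dividing by P.  Clearing denominators, that comparison is a polynomial
   inequality in u = q^(s-1), q^(t+3) >= u q^3 (from k < 2t+2) and
   q^(n-k) >= u q^2 (from n > 2k-t), which holds as soon as q^2 >= q + 1; so
   q >= 2 suffices and q need not be a prime power. *)

Section GaussianBinomial.
Variable x : rat.

Lemma qbinomSS M r :
  qbinom x M.+1 r.+1 = qbinom x M r * (x ^+ M.+1 - 1) / (x ^+ r.+1 - 1).
Proof.
rewrite /qbinom big_ord_recl big_ord_recr /= subn0.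
under eq_bigr => i _ do rewrite /bump /= add1n subSS.
by case: ifP => [/eqP->|_]; rewrite ?big_ord0 invfM ?invr1; ring.
Qed.

Lemma qbinomnS M r :
  qbinom x M r.+1 = qbinom x M r * (x ^+ (M - r) - 1) / (x ^+ r.+1 - 1).
Proof.
rewrite /qbinom big_ord_recr big_ord_recr /=.
by case: ifP => [/eqP->|_]; rewrite ?big_ord0 invfM ?invr1; ring.
Qed.

Lemma qbinom_small M r : (M < r)%N -> qbinom x M r = 0.
Proof.
move=> ltMr; rewrite /qbinom ifN ?gtn_eqF ?(leq_ltn_trans _ ltMr) //.
by rewrite (bigD1 (Ordinal ltMr)) //= subnn expr0 subrr !mul0r.
Qed.

Hypothesis x_gt1 : 1 < x.

Let x_ge0 : 0 <= x. Proof. exact: ltW (lt_trans ltr01 x_gt1). Qed.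

Lemma qbinom_pascal M r :
  qbinom x M.+1 r.+1 = qbinom x M r + x ^+ r.+1 * qbinom x M r.+1.
Proof.
have [ltMr | /subnKC defM] := ltnP M r.
  by rewrite !qbinom_small ?mulr0 ?addr0 // ltnS ltnW.
have xr1 : x ^+ r.+1 - 1 != 0 by rewrite subr_eq0 gt_eqF // exprn_egt1.
rewrite qbinomSS qbinomnS.
have -> : x ^+ M.+1 = x ^+ r.+1 * x ^+ (M - r) by rewrite -exprD addSn defM.
by field.
Qed.

Lemma qbinom_ge0 M r : 0 <= qbinom x M r.
Proof.
rewrite /qbinom; case: ifP => _ //.
by apply: divr_ge0; apply: prodr_ge0 => i _; rewrite subr_ge0 exprn_ege1 // ltW.
Qed.

Lemma qbinom_ge1 r d : 1 <= qbinom x (r + d) r.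
Proof.
elim: r => [|r IH]; first by rewrite /qbinom.
rewrite addSn qbinom_pascal (le_trans IH) // lerDl.
by rewrite mulr_ge0 ?qbinom_ge0 ?exprn_ge0.
Qed.

Lemma qbinom_expn_le M r : x ^+ r * qbinom x M r <= qbinom x M.+1 r.
Proof.
case: r => [|r]; first by rewrite /qbinom mul1r.
by rewrite qbinom_pascal lerDr qbinom_ge0.
Qed.

Lemma thetaS m : theta x m.+1 = 1 + x * theta x m.
Proof.
have x1 : x - 1 != 0 by rewrite subr_eq0 gt_eqF.
by rewrite /theta exprS; field.
Qed.

Lemma theta_ge0 m : 0 <= theta x m.
Proof.
by rewrite /theta divr_ge0 // subr_ge0 ?exprn_ege1 // ltW.
Qed.

Lemma theta_leq m p : (m <= p)%N -> theta x m <= theta x p.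
Proof.
move=> lemp; rewrite /theta ler_pM2r ?invr_gt0 ?subr_gt0 // lerD2r.
by rewrite ler_eXn2l.
Qed.

Lemma qbinom_tail_le M r j :
  qbinom x (M + j).+1 r.+1 - x ^+ (r.+1 * j.+1) * qbinom x M r.+1
    <= theta x j * qbinom x (M + j) r.
Proof.
elim: j => [|j IH].
  rewrite addn0 muln1 qbinom_pascal addrK /theta expr1.
  by rewrite divff ?mul1r // subr_eq0 gt_eqF.
rewrite addnS qbinom_pascal thetaS mulnS exprD -mulrA -addrA mulrDl mul1r lerD2l.
rewrite -mulrBr (le_trans (ler_wpM2l _ IH)) ?exprn_ge0 //.
have -> : x ^+ r.+1 * (theta x j * qbinom x (M + j) r)
          = x * theta x j * (x ^+ r * qbinom x (M + j) r) by rewrite exprS; ring.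
apply: ler_wpM2l; last exact: qbinom_expn_le.
by rewrite mulr_ge0 ?theta_ge0.
Qed.

End GaussianBinomial.

Lemma theta_gap_numer_gt0 (x u S N : rat) :
  2 <= x -> 1 < u -> u * x ^+ 3 <= S -> u * x ^+ 2 <= N ->
  0 < x * (u - 1) + u ^+ 2 * x ^+ 2 + u * (S * (N - u) - u * x ^+ 2 * N).
Proof.
move=> x_ge2 u_gt1 S_ge N_ge; have x_gt0 : 0 < x by lra.
have u_gt0 : 0 < u by lra.
have N_gt : x * u <= (x - 1) * N.
  apply: le_trans (ler_wpM2l _ N_ge); last lra.
  have -> : (x - 1) * (u * x ^+ 2) = (x - 1) * x * (x * u) by ring.
  by rewrite ler_peMl ?mulr_ge0 ?ltW //; nra.
have core : 0 <= S * (N - u) - u * x ^+ 2 * N.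
  have N_ge_u : 0 <= N - u.
    by rewrite subr_ge0 (le_trans _ N_ge) // ler_peMr ?(ltW u_gt0) // exprn_ege1 //; lra.
  have := ler_wpM2r N_ge_u S_ge.
  have : 0 <= u * x ^+ 2 * ((x - 1) * N - x * u).
    by rewrite !mulr_ge0 ?subr_ge0 ?exprn_ge0 // ltW.
  rewrite [x ^+ 3]exprS; move: (x ^+ 2) => X2; nra.
rewrite -addrA ltr_wpDl ?mulr_ge0 ?subr_ge0 ?ltW //.
by rewrite ltr_pwDl ?mulr_ge0 ?(ltW u_gt0) // mulr_gt0 ?exprn_gt0.
Qed.

Lemma theta_gap_lt (x : rat) n k t :
  2 <= x -> (t.+1 < k)%N -> (k < 2 * t + 2)%N -> (2 * k < n + t)%N ->
  theta x (k + 1) - theta x (k - t) <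
  1 + theta x (t + 2) * x ^+ (k - t - 1) * ((x ^+ (n - k) - 1) / (x ^+ (k - t - 1) - 1))
    - theta x (k - t) * ((x ^+ (n - t - 1) - 1) / (x ^+ (k - t - 1) - 1)).
Proof.
move=> x_ge2 ltk1 ltk2 ltn; have x_gt1 : 1 < x by lra.
set u := x ^+ (k - t - 1); set S := x ^+ (t + 3); set N := x ^+ (n - k).
have expE e1 e2 e : (e1 + e2 = e)%N -> x ^+ e = x ^+ e1 * x ^+ e2.
  by move=> <-; rewrite exprD.
rewrite /theta (expE (t + 3) (k - t - 1) (k + 1).+1)%N; last by lia.
rewrite (expE 2 (k - t - 1) (k - t).+1)%N; last by lia.
rewrite (expE (n - k) (k - t - 1) (n - t - 1))%N; last by lia.
rewrite -/u -/N (_ : x ^+ (t + 2).+1 = S); last by rewrite /S -addnS.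
have u_gt1 : 1 < u by rewrite exprn_egt1 //; lia.
have S_ge : u * x ^+ 3 <= S by rewrite -exprD ler_eXn2l //; lia.
have N_ge : u * x ^+ 2 <= N by rewrite -exprD ler_eXn2l //; lia.
rewrite -subr_gt0.
have -> : 1 + (S - 1) / (x - 1) * u * ((N - 1) / (u - 1))
          - (x ^+ 2 * u - 1) / (x - 1) * ((N * u - 1) / (u - 1))
          - ((S * u - 1) / (x - 1) - (x ^+ 2 * u - 1) / (x - 1))
        = (x * (u - 1) + u ^+ 2 * x ^+ 2 + u * (S * (N - u) - u * x ^+ 2 * N))
          / ((x - 1) * (u - 1)).
  by field; rewrite !subr_eq0 !gt_eqF.
by rewrite divr_gt0 ?theta_gap_numer_gt0 // mulr_gt0 // subr_gt0.
Qed.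

Theorem mainTheorem16 (q n k t : nat)
  (hq : is_prime_power q) (hq3 : (3 <= q)%N)
  (hn : (2 * k < n + t)%N) (hk1 : (t.+1 < k)%N) (hk2 : (k < 2 * t + 2)%N) :
  let Q : rat := q%:R in
  qbinom Q (n - t - 2) (k - t - 2)
    * (1 + theta Q (t + 2) * Q ^+ (k - t - 1)
           * ((Q ^+ (n - k) - 1) / (Q ^+ (k - t - 1) - 1)))
  > theta Q (k + 1) - theta Q (k - t) + qbinom Q (n - t) (k - t)
    - Q ^+ ((k - t + 1) * (k - t)) * qbinom Q (n - k - 1) (k - t).
Proof.
cbv zeta; set Q : rat := q%:R.
have Q_ge2 : 2 <= Q by rewrite (ler_nat _ 2); lia.
have Q_gt1 : 1 < Q by lra.
have tail := qbinom_tail_le Q Q_gt1 (n - k - 1) (k - t - 1) (k - t).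
have [e1 e2 e3 e4] : [/\ (k - t - 1).+1 = k - t, (n - k - 1 + (k - t)).+1 = n - t,
    n - k - 1 + (k - t) = n - t - 1 & (k - t) * (k - t).+1 = (k - t + 1) * (k - t)]%N.
  by split; lia.
rewrite e1 e2 e3 e4 in tail.
have absorb := qbinomSS Q (n - t - 2) (k - t - 2).
have [e5 e6] : ((n - t - 2).+1 = n - t - 1 /\ (k - t - 2).+1 = k - t - 1)%N by split; lia.
rewrite e5 e6 in absorb.
have P_ge1 := qbinom_ge1 Q Q_gt1 (k - t - 2) (n - k).
rewrite (_ : k - t - 2 + (n - k) = n - t - 2)%N in P_ge1; last by lia.
have E_ge0 : 0 <= theta Q (k + 1) - theta Q (k - t).
  by rewrite subr_ge0 theta_leq //; lia.
have gap := theta_gap_lt Q n k t Q_ge2 hk1 hk2 hn.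
set P := qbinom Q (n - t - 2) (k - t - 2) in absorb P_ge1 *.
set Z := theta Q (k - t) * _ in gap.
rewrite absorb (_ : theta Q _ * _ = P * Z) in tail; last by rewrite /Z; ring.
move: gap; set T := theta Q (t + 2) * _ * _; set E := theta Q (k + 1) - _ in E_ge0 *.
nra.
Qed.
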